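(* Let $G\ge 2$, $\Delta\in(0,1/2]$, and $p_t\in[\Delta,1-\Delta]$. Let $r_{t,1},\dots,r_{t,G}$ be i.i.d. $\mathrm{Bernoulli}(p_t)$, $R=\sum_j r_{t,j}$, $\hat p_t=R/G$, $\mathcal S=\{1\le R\le G-1\}$. For a real constant $c$ let $\tilde p_t=c\,\hat p_t$. Given $\delta\in(0,1)$, define \[ \epsilon_\delta:=\sqrt{\frac{1}{2G}\log\!\left(\frac{2}{\delta\bigl(1-(1-\Delta)^G-\Delta^G\bigr)}\right)}, \] $I_t:=[\hat p_t-\epsilon_\delta,\hat p_t+\epsilon_\delta]\cap[\Delta,1-\Delta]$, and $A(p):=1-(1-p)^G-p^G$. Fix $\epsilon>0$ and define \[ c_{\mathrm{low}}:=\sup_{p\in I_t}\frac{(p-\epsilon)A(p)}{p(1-p^{G-1})},\qquad c_{\mathrm{high}}:=\inf_{p\in I_t}\frac{(p+\epsilon)A(p)}{p(1-p^{G-1})}. \] Then, with probability at least $1-\delta$ conditional on $\mathcal S$ (over the draw of $\hat p_t$ determining $I_t$, $c_{\mathrm{low}}$, $c_{\mathrm{high}}$), every constant $c\in(c_{\mathrm{low}},c_{\mathrm{high}})$ satisfies $\mathbb E[\tilde p_t\mid\mathcal S]=c\,\mathbb E[\hat p_t\mid\mathcal S]\in(p_t-\epsilon,\ p_t+\epsilon)$.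
   Context: Binary-reward group setting: $G$ i.i.d. Bernoulli$(p_t)$ rewards for a prompt with expected reward $p_t$; $\hat p_t$ is the empirical group baseline; $\tilde p_t=c\hat p_t$ is a rescaled (''rectified'') baseline; $\mathcal S$ is the non-degenerate event. *)

From HB Require Import structures.
From mathcomp Require Import all_boot all_order all_algebra.
From mathcomp Require Import all_classical all_reals all_analysis.
Set Implicit Arguments. Unset Strict Implicit. Unset Printing Implicit Defensive.
Import Order.TTheory GRing.Theory Num.Theory.
Local Open Scope classical_set_scope.
Local Open Scope ring_scope.

Section Defs.
Variables (R : realType) (G : nat).

Definition outcome := {ffun 'I_G -> bool}.

Definition Rsum (w : outcome) : nat := (\sum_(i < G) (w i : nat))%N.

Definition bern_pmf (p : R) (w : outcome) : R :=
  p ^+ Rsum w * (1 - p) ^+ (G - Rsum w).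

Definition prob (p : R) (E : set outcome) : R :=
  \sum_(w : outcome | `[< E w >]) bern_pmf p w.

Definition nondeg : set outcome := [set w | (1 <= Rsum w <= G - 1)%N].

Definition condprob (p : R) (E S : set outcome) : R :=
  prob p (E `&` S) / prob p S.

Definition condexp (p : R) (X : outcome -> R) (S : set outcome) : R :=
  (\sum_(w : outcome | `[< S w >]) X w * bern_pmf p w) / prob p S.

Definition phat (w : outcome) : R := (Rsum w)%:R / G%:R.

Definition Anondeg (p : R) : R := 1 - (1 - p) ^+ G - p ^+ G.

Definition eps_delta (Delta delta : R) : R :=
  Num.sqrt (1 / (2 * G%:R) * ln (2 / (delta * Anondeg Delta))).

Definition It (Delta delta x : R) : set R :=
  [set q | x - eps_delta Delta delta <= q <= x + eps_delta Delta delta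
           /\ Delta <= q <= 1 - Delta].

Definition ratio (a q : R) : R := a * Anondeg q / (q * (1 - q ^+ (G - 1))).

Definition c_low (Delta delta eps x : R) : \bar R :=
  ereal_sup [set ((ratio (q - eps) q)%:E) | q in It Delta delta x].

Definition c_high (Delta delta eps x : R) : \bar R :=
  ereal_inf [set ((ratio (q + eps) q)%:E) | q in It Delta delta x].

End Defs.

(* The non-degenerate event S has probability A(p) and phat integrates to
   p - p^G over it, so E[phat | S] = (p - p^G) / A(p), and the ratio
   a A(q) / (q (1 - q^(G-1))) defining c_low and c_high is a / E[phat | S]
   at q = p.  Hence whenever p lies in I_t, c_low < c < c_high forces
   p - eps < c E[phat | S] < p + eps.  Now p lies in I_t as soon as
   |phat - p| <= eps_delta, and Hoeffding's inequality bounds the probability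
   of the complement by 2 exp(-2 G eps_delta^2) = delta A(Delta)
   <= delta A(p) = delta P(S), because A is smallest at the ends of
   [Delta, 1 - Delta]. *)

From Pilot Require Import Defs.
From HB Require Import structures.
From mathcomp Require Import all_boot all_order all_algebra.
From mathcomp Require Import all_classical all_reals all_analysis.
From mathcomp Require Import ring lra zify.
Import Order.TTheory GRing.Theory Num.Theory.
Import numFieldNormedType.Exports.
Local Open Scope classical_set_scope.
Local Open Scope ring_scope.

Section RealCalculus.
Context {R : realType}.

Lemma ge0_is_derive_le {f df : R -> R} {a b : R} : a <= b ->
  (forall x : R, is_derive x 1 f (df x)) -> (forall x, a <= x <= b -> 0 <= df x) ->
  f a <= f b.
Proof.
move=> ab f_df df_ge0.
have cf : {within `[a, b], continuous f}.
  apply/continuous_subspaceT => x; case: (f_df x) => f_derivable _.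
  exact/differentiable_continuous/derivable1_diffP.
have [c] := MVT_segment ab (fun x _ => f_df x) cf.
rewrite in_itv /= => cab fbfa.
by rewrite -subr_ge0 fbfa mulr_ge0 ?df_ge0 ?subr_ge0.
Qed.

Lemma le0_is_derive_ge {f df : R -> R} {a b : R} : a <= b ->
  (forall x : R, is_derive x 1 f (df x)) -> (forall x, a <= x <= b -> df x <= 0) ->
  f b <= f a.
Proof.
move=> ab f_df df_le0; rewrite -lerN2.
apply: (@ge0_is_derive_le (fun x => - f x) (fun x => - df x)) => // x /df_le0.
by rewrite oppr_ge0.
Qed.

Lemma is_deriveV {f : R -> R} {x df : R} : f x != 0 -> is_derive x 1 f df ->
  is_derive x 1 (fun y => (f y)^-1) (- (f x) ^- 2 * df).
Proof.
by move=> fx_neq0 [f_derivable <-]; split; [exact: derivableV | exact: deriveV].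
Qed.

Lemma flat0_convex_ge0 {f df d2f : R -> R} :
  (forall x : R, is_derive x 1 f (df x)) -> (forall x : R, is_derive x 1 df (d2f x)) ->
  (forall x, 0 <= d2f x) -> f 0 = 0 -> df 0 = 0 -> forall x, 0 <= f x.
Proof.
move=> f_df df_d2f d2f_ge0 f0 df0 x.
have df_ge0 y : 0 <= y -> 0 <= df y.
  by move=> y0; rewrite -df0; apply: (ge0_is_derive_le y0 df_d2f).
have df_le0 y : y <= 0 -> df y <= 0.
  by move=> y0; rewrite -df0; apply: (ge0_is_derive_le y0 df_d2f).
rewrite -f0; case: (lerP 0 x) => x0.
  by apply: (ge0_is_derive_le x0 f_df) => y /andP[y0 _]; exact: df_ge0.
by apply: (le0_is_derive_ge (ltW x0) f_df) => y /andP[_ y0]; exact: df_le0.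
Qed.

Lemma hoeffding_lemma (p x : R) : 0 <= p <= 1 ->
  1 - p + p * expR x <= expR (x * p + x ^+ 2 / 8).
Proof.
move=> /andP[p0 p1].
pose h (y : R) : R := 1 - p + p * expR y.
have h_gt0 (y : R) : 0 < h y by rewrite /h; have := expR_gt0 y; nra.
have h' (y : R) : is_derive y 1 h (p * expR y).
  by apply: is_derive_eq; rewrite add0r mul1r.
have hV' (y : R) : is_derive y 1 (fun z => (h z)^-1) (- (h y) ^- 2 * (p * expR y)).
  exact: is_deriveV (lt0r_neq0 (h_gt0 y)) (h' y).
pose u (y : R) : R := p * expR y * (h y)^-1.
have u' (y : R) : is_derive y 1 u (u y * (1 - u y)).
  rewrite {1}/u; apply: is_derive_eq; rewrite /GRing.scale /= /u /h.
  by field; exact: lt0r_neq0 (h_gt0 y).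
have ln_h' (y : R) : is_derive y 1 (@ln R \o h) ((h y)^-1 * (p * expR y)).
  exact: is_derive1_comp (is_derive1_ln (h_gt0 y)) (h' y).
pose g (y : R) : R := y * p + y ^+ 2 / 8 - (@ln R \o h) y.
have g' (y : R) : is_derive y 1 g (p + y / 4 - u y).
  rewrite /g; apply: is_derive_eq; rewrite /GRing.scale /= /u.
  by field; exact: lt0r_neq0 (h_gt0 y).
have g'' (y : R) : is_derive y 1 (fun z => p + z / 4 - u z) (1 / 4 - u y * (1 - u y)).
  by apply: is_derive_eq; rewrite /GRing.scale /=; field.
have u_var (y : R) : 0 <= 1 / 4 - u y * (1 - u y).
  by have := sqr_ge0 (u y - 1 / 2); nra.
have g0 : g 0 = 0 by rewrite /g /= /h expR0 mulr1 subrK ln1; ring.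
have g'0 : p + 0 / 4 - u 0 = 0.
  by rewrite /u /h expR0 mulr1 subrK invr1 mulr1 mul0r addr0 subrr.
have := flat0_convex_ge0 g' g'' u_var g0 g'0 x.
rewrite -/(h x) -[h x]lnK ?posrE // ler_expR /g /=; lra.
Qed.

End RealCalculus.

Section BernoulliGroup.
Context {R : realType} {G : nat}.
Implicit Types (p : R) (w : outcome G).

Lemma bern_pmfE p w : bern_pmf p w = \prod_i (if w i then p else 1 - p).
Proof.
rewrite /bern_pmf; have -> : (G - Rsum w)%N = (\sum_i (1 - w i))%N.
  rewrite sumnB; last by move=> i _; case: (w i).
  by rewrite sum_nat_const card_ord muln1.
rewrite /Rsum -!prodrXr -big_split /=; apply: eq_bigr => i _.
by case: (w i); rewrite ?expr1 ?expr0 ?mulr1 ?mul1r.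
Qed.

Lemma sum_outcome_prod (F : 'I_G -> bool -> R) :
  \sum_(w : outcome G) \prod_i F i (w i) = \prod_i (F i true + F i false).
Proof.
by rewrite -bigA_distr_bigA; apply: eq_bigr => i _; rewrite big_bool.
Qed.

Lemma bern_pmf_ge0 p w : 0 <= p <= 1 -> 0 <= bern_pmf p w.
Proof. by case/andP=> p0 p1; rewrite mulr_ge0 // exprn_ge0 // subr_ge0. Qed.

Lemma sum_bern_pmf p : \sum_(w : outcome G) bern_pmf p w = 1.
Proof.
under eq_bigr do rewrite bern_pmfE.
rewrite (sum_outcome_prod (fun _ b => if b then p else 1 - p)).
by rewrite big1 // => i _; rewrite subrKC.
Qed.

Lemma bern_mgf p l :
  \sum_(w : outcome G) bern_pmf p w * expR (l * (Rsum w)%:R)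
    = (1 - p + p * expR l) ^+ G.
Proof.
have pmf_expR w : bern_pmf p w * expR (l * (Rsum w)%:R)
    = \prod_i (if w i then p * expR l else 1 - p).
  rewrite bern_pmfE /Rsum natr_sum mulr_sumr expR_sum -big_split /=.
  by apply: eq_bigr => i _; case: (w i); rewrite ?mulr1 ?mulr0 ?expR0 ?mulr1.
rewrite (eq_bigr _ (fun w _ => pmf_expR w)).
rewrite (sum_outcome_prod (fun _ b => if b then p * expR l else 1 - p)).
by rewrite prodr_const card_ord addrC.
Qed.

Lemma bern_marginal p (i : 'I_G) :
  \sum_(w : outcome G) (w i)%:R * bern_pmf p w = p.
Proof.
pose F j (b : bool) := if b then p else (j != i)%:R * (1 - p).
have pmf_i w : (w i)%:R * bern_pmf p w = \prod_j F j (w j).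
  rewrite bern_pmfE (bigD1 i) //= [RHS](bigD1 i) //= mulrA; congr (_ * _).
    by rewrite /F eqxx; case: (w i); rewrite ?mul1r ?mul0r.
  by apply: eq_bigr => j ji; rewrite /F ji mul1r.
rewrite (eq_bigr _ (fun w _ => pmf_i w)) sum_outcome_prod (bigD1 i) //=.
rewrite /F eqxx mul0r addr0 big1 ?mulr1 // => j ji.
by rewrite ji mul1r subrKC.
Qed.

Lemma bern_mean p :
  \sum_(w : outcome G) (Rsum w)%:R * bern_pmf p w = G%:R * p.
Proof.
under eq_bigr do rewrite /Rsum natr_sum mulr_suml.
rewrite exchange_big /=.
under eq_bigr do rewrite bern_marginal.
by rewrite sumr_const card_ord mulr_natl.
Qed.

End BernoulliGroup.

Section Events.
Context {R : realType} {G : nat}.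
Implicit Types (p : R) (w : outcome G) (E F S : set (outcome G)).

Lemma prob_setI_setD p E S : prob p S = prob p (E `&` S) + prob p (S `\` E).
Proof.
rewrite /prob (bigID (fun w => `[< E w >])) /=.
by congr (_ + _); apply: eq_bigl => w; rewrite asbool_and ?asbool_neg andbC.
Qed.

Lemma le_prob p E F : 0 <= p <= 1 -> E `<=` F -> prob p E <= prob p F.
Proof.
move=> p01 EF; rewrite (prob_setI_setD p E F) setIidl //.
by rewrite lerDl /prob sumr_ge0 // => w _; exact: bern_pmf_ge0.
Qed.

Lemma prob_le_expectation p E (B : outcome G -> R) : 0 <= p <= 1 ->
  (forall w, 0 <= B w) -> (forall w, E w -> 1 <= B w) ->
  prob p E <= \sum_(w : outcome G) bern_pmf p w * B w.
Proof.
move=> p01 B_ge0 B_ge1; rewrite /prob.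
rewrite [leRHS](bigID (fun w => `[< E w >])) /= -[leLHS]addr0.
apply: lerD; last by rewrite sumr_ge0 // => w _; rewrite mulr_ge0 ?bern_pmf_ge0.
apply: ler_sum => w /asboolP Ew.
by rewrite -[leLHS]mulr1 ler_wpM2l ?bern_pmf_ge0 ?B_ge1.
Qed.

Lemma condexpZ p (c : R) (X : outcome G -> R) S :
  condexp p (fun v => c * X v) S = c * condexp p X S.
Proof.
by rewrite /condexp mulrA mulr_sumr; congr (_ / _); apply: eq_bigr => w _; rewrite mulrA.
Qed.

Lemma condprob_ge p (delta : R) E S : 0 < prob p S ->
  prob p (S `\` E) <= delta * prob p S -> 1 - delta <= condprob p E S.
Proof.
move=> S_gt0 bad_le; rewrite /condprob ler_pdivlMr //.
have := prob_setI_setD p E S; lra.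
Qed.

End Events.

Section BernoulliTail.
Context {R : realType} {G : nat}.
Implicit Types (p l : R) (w : outcome G).

Lemma bern_centered_mgf_le p l : 0 <= p <= 1 ->
  \sum_(w : outcome G) bern_pmf p w * expR (l * ((Rsum w)%:R - G%:R * p))
    <= expR (G%:R * l ^+ 2 / 8).
Proof.
move=> p01.
under eq_bigr do rewrite mulrBr expRD mulrA.
rewrite -mulr_suml bern_mgf.
have -> : G%:R * l ^+ 2 / 8 = - (l * (G%:R * p)) + G%:R * (l * p + l ^+ 2 / 8).
  by ring.
rewrite expRD [leLHS]mulrC; apply: ler_wpM2l; first exact: expR_ge0.
rewrite expRM_natl; apply: lerXn2r; rewrite ?nnegrE ?expR_ge0 ?hoeffding_lemma //.
by case/andP: p01 => p0 p1; rewrite addr_ge0 ?subr_ge0 ?mulr_ge0 ?expR_ge0.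
Qed.

Lemma expR_sym_ge1 (x c : R) : c <= `|x| -> 1 <= expR (x - c) + expR (- x - c).
Proof.
move=> cx; have := expR_ge0 (x - c); have := expR_ge0 (- x - c).
case: (ger0P x) cx => _ cx.
  have : 1 <= expR (x - c) by rewrite -expR0 ler_expR subr_ge0.
  lra.
have : 1 <= expR (- x - c) by rewrite -expR0 ler_expR subr_ge0.
lra.
Qed.

Lemma hoeffding_bern p (t : R) : (0 < G)%N -> 0 <= p <= 1 -> 0 <= t ->
  prob p [set w : outcome G | t < `|phat R w - p|] <= 2 * expR (- 2 * G%:R * t ^+ 2).
Proof.
move=> G_gt0 p01 t0.
have G0 : (0 : R) < G%:R by rewrite ltr0n.
(* lambda = 4 t minimizes G lambda^2 / 8 - lambda G t = G lambda^2 / 8 - c. *)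
pose c := 4 * G%:R * t ^+ 2.
have tail_half l : l ^+ 2 = 16 * t ^+ 2 ->
    \sum_(w : outcome G) bern_pmf p w * expR (l * ((Rsum w)%:R - G%:R * p) - c)
      <= expR (- 2 * G%:R * t ^+ 2).
  move=> l2; under eq_bigr do rewrite expRD mulrA.
  rewrite -mulr_suml.
  apply: le_trans (ler_wpM2r (expR_ge0 _) (bern_centered_mgf_le p l p01)) _.
  by rewrite -expRD l2 /c le_eqVlt; apply/orP; left; apply/eqP; congr expR; field.
apply: (le_trans (prob_le_expectation p _
  (fun w => expR (4 * t * ((Rsum w)%:R - G%:R * p) - c)
          + expR (- (4 * t) * ((Rsum w)%:R - G%:R * p) - c)) p01 _ _)).
- by move=> w; rewrite addr_ge0 ?expR_ge0.
- move=> w /= far; rewrite mulNr; apply: expR_sym_ge1.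
  have -> : 4 * t * ((Rsum w)%:R - G%:R * p) = 4 * t * G%:R * (phat R w - p).
    by rewrite /phat; field; rewrite lt0r_neq0.
  have -> : c = 4 * t * G%:R * t by rewrite /c; ring.
  have tG_ge0 : 0 <= 4 * t * G%:R by rewrite !mulr_ge0 // ltW.
  by rewrite normrM ger0_norm // ler_wpM2l // ltW.
under eq_bigr do rewrite mulrDr.
rewrite big_split [leRHS]mulr_natl [leRHS]mulr2n.
by apply: lerD; apply: tail_half; rewrite ?sqrrN; ring.
Qed.

End BernoulliTail.

Section NondegenerateGroup.
Context {R : realType} {G : nat}.
Hypothesis G_gt0 : (0 < G)%N.
Implicit Types (p : R) (w : outcome G).

Definition all_false : outcome G := [ffun => false].
Definition all_true : outcome G := [ffun => true].

Lemma Rsum_le w : (Rsum w <= G)%N.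
Proof.
rewrite -[X in (_ <= X)%N]card_ord -sum1_card /Rsum.
by apply: leq_sum => i _; exact: leq_b1.
Qed.

Lemma Rsum_eq0 w : (Rsum w == 0)%N = (w == all_false).
Proof.
rewrite /Rsum sum_nat_eq0; apply/forallP/eqP => [w0 | ->]; last by move=> i; rewrite ffunE.
by apply/ffunP => i; rewrite ffunE; move/(_ i): w0; case: (w i).
Qed.

Lemma Rsum_eqG w : (Rsum w == G) = (w == all_true).
Proof.
have Rsum_compl : (Rsum w + \sum_i (1 - w i) = G)%N.
  rewrite /Rsum -big_split /= -[RHS]card_ord -sum1_card.
  by apply: eq_bigr => i _; case: (w i).
apply/eqP/eqP => [RG | ->]; last first.
  by rewrite /Rsum -[RHS]card_ord -sum1_card; apply: eq_bigr => i _; rewrite ffunE.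
have : (\sum_i (1 - w i) == 0)%N by apply/eqP; lia.
rewrite sum_nat_eq0 => /forallP w1.
by apply/ffunP => i; rewrite ffunE; move/(_ i): w1; case: (w i).
Qed.

Lemma nondegE w : `[< nondeg w >] = (w != all_false) && (w != all_true).
Proof.
rewrite asboolb -Rsum_eq0 -Rsum_eqG; have := Rsum_le w.
by case: (Rsum w) => [|n] //=; lia.
Qed.

Lemma sum_nondeg (F : outcome G -> R) :
  \sum_(w | `[< nondeg w >]) F w = \sum_w F w - F all_false - F all_true.
Proof.
have false_neq_true : all_true != all_false.
  by apply/eqP => /ffunP /(_ (Ordinal G_gt0)); rewrite !ffunE.
rewrite [in RHS](bigD1 all_false) //= [in RHS](bigD1 all_true) /= ?false_neq_true //.
rewrite (eq_bigl _ _ nondegE); ring.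
Qed.

Lemma Rsum_all_false : Rsum all_false = 0%N.
Proof. by apply/eqP; rewrite Rsum_eq0. Qed.

Lemma Rsum_all_true : Rsum all_true = G.
Proof. by apply/eqP; rewrite Rsum_eqG. Qed.

Lemma prob_nondeg p : prob p (@nondeg G) = Anondeg G p.
Proof.
rewrite /prob sum_nondeg sum_bern_pmf /bern_pmf Rsum_all_false Rsum_all_true.
by rewrite subn0 subnn !expr0 mul1r mulr1.
Qed.

Lemma condexp_phat p : condexp p (@phat R G) (@nondeg G) = (p - p ^+ G) / Anondeg G p.
Proof.
have G_neq0 : (G%:R : R) != 0 by rewrite pnatr_eq0 -lt0n.
rewrite /condexp prob_nondeg sum_nondeg; congr (_ / _).
under eq_bigr do rewrite /phat mulrAC.
rewrite -mulr_suml bern_mean /phat /bern_pmf Rsum_all_false Rsum_all_true.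
by rewrite subnn expr0 mulr1; field.
Qed.

End NondegenerateGroup.

Section NondegenerateProbability.
Context {R : realType} {G : nat}.
Implicit Types (p : R).

Lemma powsum_nonincr (a b : R) : 0 <= a <= b -> b <= 1 / 2 ->
  b ^+ G + (1 - b) ^+ G <= a ^+ G + (1 - a) ^+ G.
Proof.
move=> /andP[a0 ab] b_half.
pose f (y : R) := y ^+ G + (1 - y) ^+ G.
have f' (y : R) : is_derive y 1 f (G%:R * y ^+ G.-1 - G%:R * (1 - y) ^+ G.-1).
  have -> : f = (id ^+ G + (fun z : R => 1 - z) ^+ G)%R.
    by apply/funext => z; rewrite /f /= !exprfctE.
  by apply: is_derive_eq; rewrite /GRing.scale /=; ring.
apply: (le0_is_derive_ge ab f') => y /andP[ay yb].
by rewrite subr_le0 ler_wpM2l // lerXn2r // ?nnegrE; lra.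
Qed.

Lemma Anondeg_sym p : Anondeg G (1 - p) = Anondeg G p.
Proof. by rewrite /Anondeg subKr addrAC. Qed.

Lemma Anondeg_le (d p : R) : 0 <= d <= 1 / 2 -> d <= p <= 1 - d ->
  Anondeg G d <= Anondeg G p.
Proof.
move=> /andP[d0 d_half] /andP[dp pd].
wlog p_half : p dp pd / p <= 1 / 2.
  move=> wlog_half; case: (lerP p (1 / 2)); first exact: wlog_half.
  by move=> p_half; rewrite -[Anondeg G p]Anondeg_sym; apply: wlog_half; lra.
have := @powsum_nonincr d p; rewrite /Anondeg d0 dp p_half => /(_ isT isT); lra.
Qed.

Lemma Anondeg_gt0 p : (1 < G)%N -> 0 < p < 1 -> 0 < Anondeg G p.
Proof.
move=> G_gt1 /andP[p0 p1].
have : p ^+ G < p by rewrite ltr_iXnr.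
have : (1 - p) ^+ G < 1 - p by rewrite ltr_iXnr ?subr_gt0 // ltrBlDr ltrDl.
rewrite /Anondeg; lra.
Qed.

Lemma Anondeg_le1 p : 0 <= p <= 1 -> Anondeg G p <= 1.
Proof.
case/andP=> p0 p1; have := exprn_ge0 G p0.
have : 0 <= (1 - p) ^+ G by rewrite exprn_ge0 // subr_ge0.
rewrite /Anondeg; lra.
Qed.

Lemma two_expR_eps_delta (Delta delta : R) : (1 < G)%N ->
  0 < Delta < 1 -> 0 < delta < 1 ->
  2 * expR (- 2 * G%:R * eps_delta G Delta delta ^+ 2) = delta * Anondeg G Delta.
Proof.
move=> G_gt1 Delta01 /andP[delta_gt0 delta_lt1].
have G0 : (0 : R) < G%:R by rewrite ltr0n ltnW.
have A_gt0 := Anondeg_gt0 Delta G_gt1 Delta01.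
have A_le1 : Anondeg G Delta <= 1.
  by case/andP: Delta01 => D0 D1; rewrite Anondeg_le1 // !ltW.
have dA_gt0 : 0 < delta * Anondeg G Delta by rewrite mulr_gt0.
have ln_ge0 : 0 <= ln (2 / (delta * Anondeg G Delta)).
  by rewrite ln_ge0 // ler_pdivlMr // mul1r; nra.
rewrite sqr_sqrtr ?mulr_ge0 ?divr_ge0 ?ler0n //.
have -> : - 2 * G%:R * (1 / (2 * G%:R) * ln (2 / (delta * Anondeg G Delta)))
    = - ln (2 / (delta * Anondeg G Delta)).
  by field; rewrite lt0r_neq0.
rewrite expRN lnK ?posrE ?divr_gt0 //; field.
by rewrite -negb_or -mulf_eq0 mulrC lt0r_neq0.
Qed.

End NondegenerateProbability.

Section RectifiedBand.
Context {R : realType} {G : nat} {Delta delta eps : R}.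

Lemma ratio_le_c_low {x q : R} : It G Delta delta x q ->
  ((Defs.ratio G (q - eps) q)%:E <= c_low G Delta delta eps x)%E.
Proof. by move=> Iq; apply: ereal_sup_ubound; exists q. Qed.

Lemma c_high_le_ratio {x q : R} : It G Delta delta x q ->
  (c_high G Delta delta eps x <= (Defs.ratio G (q + eps) q)%:E)%E.
Proof. by move=> Iq; apply: ereal_inf_lbound; exists q. Qed.

Lemma mean_band_of_ratio (p c : R) : (1 < G)%N -> 0 < p < 1 ->
  Defs.ratio G (p - eps) p < c < Defs.ratio G (p + eps) p ->
  p - eps < c * ((p - p ^+ G) / Anondeg G p) < p + eps.
Proof.
move=> G_gt1 p01 /andP[lo hi].
have A_gt0 : 0 < Anondeg G p by exact: Anondeg_gt0.
have m_gt0 : 0 < p - p ^+ G by case/andP: p01 => p0 p1; rewrite subr_gt0 ltr_iXnr.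
have denomE : p * (1 - p ^+ (G - 1)) = p - p ^+ G.
  by rewrite mulrBr mulr1 -exprS subn1 prednK // ltnW.
move: lo hi; rewrite /Defs.ratio denomE ltr_pdivrMr // ltr_pdivlMr // => lo hi.
by rewrite mulrA ltr_pdivlMr // ltr_pdivrMr // lo hi.
Qed.

Lemma rectified_mean_in_band (x p c : R) : (1 < G)%N -> 0 < p < 1 ->
  It G Delta delta x p ->
  (c_low G Delta delta eps x < c%:E < c_high G Delta delta eps x)%E ->
  p - eps < c * condexp p (@phat R G) (@nondeg G) < p + eps.
Proof.
move=> G_gt1 p01 Ip /andP[low_lt_c c_lt_high].
rewrite condexp_phat; last exact: ltnW.
apply: mean_band_of_ratio => //.
have := le_lt_trans (ratio_le_c_low Ip) low_lt_c.
by have := lt_le_trans c_lt_high (c_high_le_ratio Ip); rewrite !lte_fin => -> ->.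
Qed.

End RectifiedBand.

Theorem lemma1 (R : realType) (G : nat) (Delta p delta eps : R) :
  (2 <= G)%N ->
  0 < Delta <= 1 / 2 ->
  Delta <= p <= 1 - Delta ->
  0 < delta < 1 ->
  0 < eps ->
  1 - delta <=
  condprob p
    [set w : outcome G | forall c : R,
       (c_low G Delta delta eps (phat R w) < c%:E < c_high G Delta delta eps (phat R w))%E ->
       condexp p (fun v => c * phat R v) (@nondeg G)
         = c * condexp p (@phat R G) (@nondeg G)
       /\ p - eps < c * condexp p (@phat R G) (@nondeg G) < p + eps]
    (@nondeg G).
Proof.
move=> G_gt1 /andP[Delta_gt0 Delta_le] /andP[Delta_p p_Delta] delta01 _.
have G_gt0 : (0 < G)%N by exact: ltnW.
have p01 : 0 < p < 1 by apply/andP; split; lra.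
have p01w : 0 <= p <= 1 by case/andP: p01 => p0 p1; rewrite !ltW.
set E := [set w : outcome G | _].
have near_good w : `|phat R w - p| <= eps_delta G Delta delta -> E w.
  rewrite ler_distlC => near c band; rewrite condexpZ; split => //.
  by apply: rectified_mean_in_band band => //; split; rewrite ?near ?Delta_p.
apply: condprob_ge; first by rewrite (prob_nondeg G_gt0) Anondeg_gt0.
rewrite (prob_nondeg G_gt0); apply: (@le_trans _ _ (delta * Anondeg G Delta)).
  rewrite -(two_expR_eps_delta Delta delta G_gt1 _ delta01); last first.
    by apply/andP; split; lra.
  apply: le_trans (hoeffding_bern p _ G_gt0 p01w (sqrtr_ge0 _)).
  apply: le_prob => // w [_ notE]; rewrite /= ltNge; apply/negP => /near_good.
  exact: notE.
rewrite ler_wpM2l //; first by case/andP: delta01 => d0 _; exact: ltW.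
by apply: Anondeg_le; rewrite ?Delta_p ?p_Delta ?Delta_le ?(ltW Delta_gt0).
Qed.
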